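(* Let $\mathcal{C}$ be a periodic cylinder of $\Phi$ and $\mathcal{C}^{-1}$ its reversed cylinder. Then $\mathcal{C}$ is $\lambda^-$-stable if and only if $\mathcal{C}^{-1}$ is $\lambda^+$-stable.
   Context: Let $P$ be a simply connected polygon in $\mathbb{R}^2$ with $d$ sides, labeled $1,\dots,d$, with $\partial P$ oriented anticlockwise. The billiard map $\Phi$ acts on unit vectors $(x,v)$ with $x\in\partial P$ and $v$ pointing into $P$: $\Phi(x,v)=(\bar x,\bar v)$, where $\bar x$ is the first point at which the ray from $x$ in direction $v$ meets $\partial P$ and $\bar v$ is the inward vector obtained by reflecting $v$ in the side containing $\bar x$. Vectors based at vertices, and vectors whose image would be based at a vertex, are excluded; the remaining domain is $M'$. Points of $M'$ have coordinates $(s,\theta)$, $s$ the arc-length parameter of $x$ on $\partial P$, $\theta\in(-\pi/2,\pi/2)$ the oriented angle between $v$ and the inward normal at $x$. $\Sigma_{i,j}$ is the set of $(s,\theta)\in M'$ with $x$ on side $i$ and $\bar x$ on side $j$. For $\lambda>0$ let $R_\lambda(s,\theta)=(s,\lambda\theta)$ and $\Phi_\lambda:=R_\lambda\circ\Phi$ (pinball billiard map for $\lambda\neq1$). The itinerary of an orbit $(s_k,\theta_k)$ is the sequence $(i_k)$ with $(s_k,\theta_k)\in\Sigma_{i_k,i_{k+1}}$. Every periodic orbit of $\Phi$ lies in a periodic cylinder: a maximal one-parameter family of parallel periodic orbits of $\Phi$ with the same itinerary. Let $S(s,\theta)=(s,-\theta)$; the reversed cylinder $\mathcal{C}^{-1}$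 of $\mathcal{C}$ is the periodic cylinder obtained by applying $S$ to $\mathcal{C}$ (time reversal). A periodic orbit $q$ of $\Phi$ is $\lambda^{+}$-stable (resp. $\lambda^-$-stable) if there exist a strictly decreasing (resp. strictly increasing) sequence $\lambda_n\to1$ and, for each $n$, a periodic orbit $q_n$ of $\Phi_{\lambda_n}$ with the same itinerary as $q$ such that $q_n\to q$. A periodic cylinder is $\lambda^\pm$-stable if it contains a $\lambda^\pm$-stable periodic orbit. *)

From Stdlib Require Import Reals Lra Lia.
Open Scope R_scope.

Definition pt := (R * R)%type.
Definition vadd (a b : pt) : pt := (fst a + fst b, snd a + snd b).
Definition vsub (a b : pt) : pt := (fst a - fst b, snd a - snd b).
Definition vscal (c : R) (a : pt) : pt := (c * fst a, c * snd a).
Definition dot (a b : pt) : R := fst a * fst b + snd a * snd b.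
Definition cross (a b : pt) : R := fst a * snd b - snd a * fst b.
Definition vnorm (a : pt) : R := sqrt (dot a a).

(* Polygon with d sides given by vertices V 0, ..., V (d-1); side i (0 <= i < d)
   goes from V i to V (nxt d i). (The paper labels sides 1..d.) *)
Definition nxt (d i : nat) : nat := Nat.modulo (S i) d.

Definition seg (a b y : pt) : Prop :=
  exists u, 0 <= u <= 1 /\ y = vadd a (vscal u (vsub b a)).

Definition side_seg (d : nat) (V : nat -> pt) (i : nat) (y : pt) : Prop :=
  seg (V i) (V (nxt d i)) y.

Definition on_boundary (d : nat) (V : nat -> pt) (y : pt) : Prop :=
  exists i, (i < d)%nat /\ side_seg d V i y.

(* Simply connected (= simple) polygon with d sides, boundary oriented
   anticlockwise (positive signed area). *)
Definition simple_polygon (d : nat) (V : nat -> pt) : Prop :=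
  (3 <= d)%nat /\
  (forall i, (i < d)%nat -> V i <> V (nxt d i)) /\
  (forall i, (i < d)%nat ->
     cross (vsub (V (nxt d i)) (V i)) (vsub (V (nxt d (nxt d i))) (V (nxt d i))) <> 0) /\
  (forall i j y, (i < d)%nat -> (j < d)%nat -> i <> j ->
     side_seg d V i y -> side_seg d V j y ->
     (j = nxt d i /\ y = V j) \/ (i = nxt d j /\ y = V i)) /\
  0 < sum_f_R0 (fun i => cross (V i) (V (nxt d i))) (d - 1).

Definition side_len (d : nat) (V : nat -> pt) (i : nat) : R :=
  vnorm (vsub (V (nxt d i)) (V i)).

(* arc-length coordinate of vertex i: sigma i = sum of lengths of sides < i *)
Fixpoint sigma (d : nat) (V : nat -> pt) (i : nat) : R :=
  match i with
  | O => 0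
  | S k => sigma d V k + side_len d V k
  end.

Definition side_of (d : nat) (V : nat -> pt) (s : R) (i : nat) : Prop :=
  (i < d)%nat /\ sigma d V i < s < sigma d V (S i).

Definition pos (d : nat) (V : nat -> pt) (i : nat) (s : R) : pt :=
  vadd (V i) (vscal ((s - sigma d V i) / side_len d V i) (vsub (V (nxt d i)) (V i))).

(* unit tangent of side i and inward (left, since anticlockwise) unit normal *)
Definition tang (d : nat) (V : nat -> pt) (i : nat) : pt :=
  vscal (/ side_len d V i) (vsub (V (nxt d i)) (V i)).
Definition inormal (d : nat) (V : nat -> pt) (i : nat) : pt :=
  (- snd (tang d V i), fst (tang d V i)).

(* unit vector at side i making oriented angle theta with the inward normal
   (the normal rotated anticlockwise by theta) *)
Definition dirv (d : nat) (V : nat -> pt) (i : nat) (theta : R) : pt :=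
  vadd (vscal (cos theta) (inormal d V i)) (vscal (- sin theta) (tang d V i)).

Definition reflect (d : nat) (V : nat -> pt) (j : nat) (v : pt) : pt :=
  vsub v (vscal (2 * dot v (inormal d V j)) (inormal d V j)).

(* The billiard map Phi, as a (functional) relation on coordinates (s,theta).
   Its domain is M'. *)
Definition Phi (d : nat) (V : nat -> pt) (p q : pt) : Prop :=
  exists i j tau,
    side_of d V (fst p) i /\ - (PI / 2) < snd p < PI / 2 /\
    side_of d V (fst q) j /\ 0 < tau /\
    pos d V j (fst q) = vadd (pos d V i (fst p)) (vscal tau (dirv d V i (snd p))) /\
    (forall tau', 0 < tau' < tau ->
       ~ on_boundary d V (vadd (pos d V i (fst p)) (vscal tau' (dirv d V i (snd p))))) /\
    - (PI / 2) < snd q < PI / 2 /\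
    dirv d V j (snd q) = reflect d V j (dirv d V i (snd p)).

Definition inM' (d : nat) (V : nat -> pt) (p : pt) : Prop := exists q, Phi d V p q.

(* pinball billiard map Phi_lambda = R_lambda o Phi *)
Definition Phi_lam (d : nat) (V : nat -> pt) (lam : R) (p q : pt) : Prop :=
  exists q', Phi d V p q' /\ q = (fst q', lam * snd q').

Definition is_orbit (F : pt -> pt -> Prop) (p : pt) (o : nat -> pt) : Prop :=
  o O = p /\ forall k, F (o k) (o (S k)).

Definition periodic (F : pt -> pt -> Prop) (p : pt) : Prop :=
  exists o, is_orbit F p o /\ exists N, (0 < N)%nat /\ o N = p.

Definition same_itin (d : nat) (V : nat -> pt) (o o' : nat -> pt) : Prop :=
  forall k i, side_of d V (fst (o k)) i <-> side_of d V (fst (o' k)) i.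

Definition lam_plus_stable_pt (d : nat) (V : nat -> pt) (p : pt) : Prop :=
  periodic (Phi d V) p /\
  exists (lam : nat -> R) (q : nat -> pt),
    (forall n, lam (S n) < lam n) /\ (forall n, 0 < lam n) /\ Un_cv lam 1 /\
    Un_cv (fun n => fst (q n)) (fst p) /\ Un_cv (fun n => snd (q n)) (snd p) /\
    forall n, periodic (Phi_lam d V (lam n)) (q n) /\
      exists o o', is_orbit (Phi d V) p o /\ is_orbit (Phi_lam d V (lam n)) (q n) o' /\
                   same_itin d V o o'.

Definition lam_minus_stable_pt (d : nat) (V : nat -> pt) (p : pt) : Prop :=
  periodic (Phi d V) p /\
  exists (lam : nat -> R) (q : nat -> pt),
    (forall n, lam n < lam (S n)) /\ (forall n, 0 < lam n) /\ Un_cv lam 1 /\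
    Un_cv (fun n => fst (q n)) (fst p) /\ Un_cv (fun n => snd (q n)) (snd p) /\
    forall n, periodic (Phi_lam d V (lam n)) (q n) /\
      exists o o', is_orbit (Phi d V) p o /\ is_orbit (Phi_lam d V (lam n)) (q n) o' /\
                   same_itin d V o o'.

(* Periodic cylinder, as a subset of M' (the union of its orbits): the orbits
   through the points (s, theta0), s ranging over the connected component
   containing s0 of the set of s such that (s,theta0) is Phi-periodic with the
   same itinerary as (s0,theta0).  (Parallel orbits with the same itinerary
   = same initial side and same initial angle.) *)
Definition cyl_good (d : nat) (V : nat -> pt) (s0 theta0 s : R) : Prop :=
  periodic (Phi d V) (s, theta0) /\
  exists o o', is_orbit (Phi d V) (s0, theta0) o /\ is_orbit (Phi d V) (s, theta0) o' /\
               same_itin d V o o'.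

Definition is_periodic_cylinder (d : nat) (V : nat -> pt) (C : pt -> Prop) : Prop :=
  exists s0 theta0,
    periodic (Phi d V) (s0, theta0) /\
    forall p, C p <->
      exists s o k,
        (forall r, Rmin s s0 <= r <= Rmax s s0 -> cyl_good d V s0 theta0 r) /\
        is_orbit (Phi d V) (s, theta0) o /\ p = o k.

(* reversed cylinder: image under S(s,theta) = (s,-theta) *)
Definition reversed (C : pt -> Prop) : pt -> Prop := fun p => C (fst p, - snd p).

Definition cyl_plus_stable (d : nat) (V : nat -> pt) (C : pt -> Prop) : Prop :=
  exists p, C p /\ lam_plus_stable_pt d V p.
Definition cyl_minus_stable (d : nat) (V : nat -> pt) (C : pt -> Prop) : Prop :=
  exists p, C p /\ lam_minus_stable_pt d V p.

(* The billiard map is reversible: if Φ sends (s, θ) to (s', θ') then it sends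
   (s', -θ') to (s, -θ), because the reflection law is symmetric in time.  For
   the pinball map this gives: if Φ_λ sends a to b then Φ_{1/λ} sends T_λ b to
   T_λ a, where T_λ (s, θ) = (s, -θ/λ).  Reading a periodic orbit of Φ_λ
   backwards through T_λ thus yields a periodic orbit of Φ_{1/λ} with the
   reversed itinerary.  If periodic orbits q_n of Φ_{λ_n}, λ_n increasing to 1,
   converge to a periodic orbit q of Φ, then the T_{λ_n} q_n are periodic
   orbits of Φ_{1/λ_n}, 1/λ_n decreasing to 1, converging to S q; and S q lies
   in the reversed cylinder. *)

From Stdlib Require Import Reals Lra Lia Psatz.
(* Imported last so that its [sigma] is not shadowed by Stdlib's [Rsigma.sigma]. *)
Open Scope R_scope.

Lemma side_len_pos d V i : V i <> V (nxt d i) -> 0 < side_len d V i.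
Proof.
  intro Hv. unfold side_len, vnorm, dot, vsub.
  destruct (V i) as [a b], (V (nxt d i)) as [c e]; simpl.
  apply sqrt_lt_R0.
  destruct (Req_dec c a), (Req_dec e b); try nra.
  subst. exfalso. exact (Hv eq_refl).
Qed.

Lemma tang_unit d V i : V i <> V (nxt d i) ->
  fst (tang d V i) * fst (tang d V i) + snd (tang d V i) * snd (tang d V i) = 1.
Proof.
  intro Hv. pose proof (side_len_pos d V i Hv) as HL.
  unfold tang, side_len, vnorm, dot, vsub, vscal in *.
  destruct (V i) as [a b], (V (nxt d i)) as [c e]; simpl in *.
  set (q := (c - a) * (c - a) + (e - b) * (e - b)) in *.
  assert (Hq : 0 <= q) by (unfold q; pose proof (Rle_0_sqr (c - a)); pose proof (Rle_0_sqr (e - b)); unfold Rsqr in *; lra).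
  pose proof (sqrt_sqrt q Hq) as Hsq.
  set (L := sqrt q) in *.
  transitivity (/ L * / L * q); [unfold q; ring|].
  rewrite <- Hsq. field. lra.
Qed.

Lemma sigma_le d V i k : sigma d V i <= sigma d V (i + k).
Proof.
  induction k as [|k IH]; [rewrite Nat.add_0_r; lra|].
  rewrite Nat.add_succ_r. simpl.
  pose proof (sqrt_pos (dot (vsub (V (nxt d (i + k)%nat)) (V (i + k)%nat))
                            (vsub (V (nxt d (i + k)%nat)) (V (i + k)%nat)))).
  unfold side_len, vnorm. lra.
Qed.

Lemma side_of_unique d V s i j : side_of d V s i -> side_of d V s j -> i = j.
Proof.
  intros [_ Hi] [_ Hj].
  destruct (Nat.lt_trichotomy i j) as [h|[h|h]]; auto; exfalso.
  - pose proof (sigma_le d V (S i) (j - S i)) as Hle.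
    replace (S i + (j - S i))%nat with j in Hle by lia. lra.
  - pose proof (sigma_le d V (S j) (i - S j)) as Hle.
    replace (S j + (i - S j))%nat with i in Hle by lia. lra.
Qed.

Lemma side_param_range d V i s : side_of d V s i ->
  0 < (s - sigma d V i) / side_len d V i < 1.
Proof.
  intros [_ Hs]. replace (side_len d V i) with (sigma d V (S i) - sigma d V i)
    by (simpl; ring).
  split.
  - apply Rdiv_lt_0_compat; lra.
  - apply Rmult_lt_reg_r with (sigma d V (S i) - sigma d V i); [lra|].
    unfold Rdiv. rewrite Rmult_assoc, Rinv_l; lra.
Qed.

Lemma pos_side_seg d V i s : side_of d V s i -> side_seg d V i (pos d V i s).
Proof.
  intro Hs. exists ((s - sigma d V i) / side_len d V i).
  split; [pose proof (side_param_range d V i s Hs); lra | reflexivity].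
Qed.

Lemma pos_on_boundary d V i s : side_of d V s i -> on_boundary d V (pos d V i s).
Proof. intro Hs. exists i. split; [apply Hs | apply pos_side_seg, Hs]. Qed.

Lemma pair_neq (a b c e : R) : (a, b) <> (c, e) -> a <> c \/ b <> e.
Proof. intro H. destruct (Req_dec a c), (Req_dec b e); subst; auto. Qed.

Lemma pos_neq_vertices d V i s : V i <> V (nxt d i) -> side_of d V s i ->
  pos d V i s <> V i /\ pos d V i s <> V (nxt d i).
Proof.
  intros Hv Hs. pose proof (side_param_range d V i s Hs) as Hu. unfold pos in *.
  set (u := (s - sigma d V i) / side_len d V i) in *.
  unfold vadd, vscal, vsub.
  destruct (V i) as [a b], (V (nxt d i)) as [c e]; simpl.
  apply pair_neq in Hv.
  split; intro H; injection H; intros; destruct Hv; nra.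
Qed.

Lemma pos_inj_side d V i s1 s2 : V i <> V (nxt d i) ->
  side_of d V s1 i -> side_of d V s2 i -> pos d V i s1 = pos d V i s2 -> s1 = s2.
Proof.
  intros Hv H1 H2 H. pose proof (side_len_pos d V i Hv) as HL. unfold pos in H.
  assert (Hu : (s1 - sigma d V i) / side_len d V i = (s2 - sigma d V i) / side_len d V i).
  { unfold vadd, vscal, vsub in H.
    destruct (V i) as [a b], (V (nxt d i)) as [c e]; simpl in H.
    apply pair_neq in Hv. injection H; intros.
    destruct Hv.
    - apply Rmult_eq_reg_r with (r := c - a); lra.
    - apply Rmult_eq_reg_r with (r := e - b); lra. }
  unfold Rdiv in Hu. apply Rmult_eq_reg_r in Hu; [lra|].
  apply Rgt_not_eq, Rinv_0_lt_compat; lra.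
Qed.

Lemma polygon_side_ne d V i : simple_polygon d V -> (i < d)%nat -> V i <> V (nxt d i).
Proof. intros [_ [Hv _]]. apply Hv. Qed.

(* Sides of a simple polygon only meet at shared vertices. *)
Lemma pos_inj d V i j si sj : simple_polygon d V ->
  side_of d V si i -> side_of d V sj j -> pos d V i si = pos d V j sj ->
  i = j /\ si = sj.
Proof.
  intros HP Hi Hj E.
  assert (Hij : i = j).
  { destruct (Nat.eq_dec i j) as [e|ne]; auto. exfalso.
    destruct (pos_neq_vertices d V i si (polygon_side_ne d V i HP (proj1 Hi)) Hi) as [Ni _].
    destruct (pos_neq_vertices d V j sj (polygon_side_ne d V j HP (proj1 Hj)) Hj) as [Nj _].
    destruct HP as [_ [_ [_ [Hsimple _]]]].
    assert (Sj : side_seg d V j (pos d V i si)) by (rewrite E; apply pos_side_seg, Hj).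
    destruct (Hsimple i j _ (proj1 Hi) (proj1 Hj) ne (pos_side_seg d V i si Hi) Sj)
      as [[_ Ev]|[_ Ev]].
    - rewrite E in Ev. exact (Nj Ev).
    - exact (Ni Ev). }
  subst j. split; auto.
  exact (pos_inj_side d V i si sj (polygon_side_ne d V i HP (proj1 Hi)) Hi Hj E).
Qed.

(** * Reversibility of the billiard map *)

Definition vneg (a : pt) : pt := (- fst a, - snd a).

Definition angle_neg (a : pt) : pt := (fst a, - snd a).

Lemma dirv_coord d V i th : dirv d V i th =
  (cos th * - snd (tang d V i) + - sin th * fst (tang d V i),
   cos th * fst (tang d V i) + - sin th * snd (tang d V i)).
Proof. reflexivity. Qed.

Lemma reflect_coord d V j (w : pt) : reflect d V j w =
  (fst w - 2 * (fst w * - snd (tang d V j) + snd w * fst (tang d V j)) * - snd (tang d V j),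
   snd w - 2 * (fst w * - snd (tang d V j) + snd w * fst (tang d V j)) * fst (tang d V j)).
Proof. reflexivity. Qed.

Lemma dirv_inj d V i t1 t2 : V i <> V (nxt d i) ->
  - (PI / 2) < t1 < PI / 2 -> - (PI / 2) < t2 < PI / 2 ->
  dirv d V i t1 = dirv d V i t2 -> t1 = t2.
Proof.
  intros Hv H1 H2 H. pose proof (tang_unit d V i Hv) as Hu.
  rewrite !dirv_coord in H. destruct (tang d V i) as [a b]; simpl in *.
  injection H; intros E2 E1.
  apply sin_inj; try lra.
  (* the tangential component of [dirv d V i t] is [- sin t] *)
  assert (E : (cos t1 * - b + - sin t1 * a) * a + (cos t1 * a + - sin t1 * b) * b =
              (cos t2 * - b + - sin t2 * a) * a + (cos t2 * a + - sin t2 * b) * b)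
    by (rewrite E1, E2; ring).
  replace ((cos t1 * - b + - sin t1 * a) * a + (cos t1 * a + - sin t1 * b) * b)
    with (- sin t1 * (a * a + b * b)) in E by ring.
  replace ((cos t2 * - b + - sin t2 * a) * a + (cos t2 * a + - sin t2 * b) * b)
    with (- sin t2 * (a * a + b * b)) in E by ring.
  rewrite Hu in E. lra.
Qed.

Lemma dirv_opp_of_reflect d V j th (w : pt) : V j <> V (nxt d j) ->
  dirv d V j th = reflect d V j w -> dirv d V j (- th) = vneg w.
Proof.
  intros Hv H. pose proof (tang_unit d V j Hv) as Hu.
  rewrite dirv_coord, reflect_coord in H. rewrite dirv_coord, cos_neg, sin_neg.
  destruct (tang d V j) as [a b], w as [w1 w2]; unfold vneg; simpl in *.
  injection H; intros E2 E1.
  set (k := w1 * - b + w2 * a) in *.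
  set (c := cos th) in *. set (s := sin th) in *.
  (* the normal component of [dirv d V j th] is [cos th] *)
  assert (Hc : c = - k).
  { assert (X : (c * - b + - s * a) * - b + (c * a + - s * b) * a =
                (w1 - 2 * k * - b) * - b + (w2 - 2 * k * a) * a)
      by (rewrite E1, E2; reflexivity).
    replace ((c * - b + - s * a) * - b + (c * a + - s * b) * a)
      with (c * (a * a + b * b)) in X by ring.
    replace ((w1 - 2 * k * - b) * - b + (w2 - 2 * k * a) * a)
      with (k - 2 * k * (a * a + b * b)) in X by (unfold k; ring).
    rewrite Hu in X. lra. }
  f_equal; nra.
Qed.

Lemma dirv_opp_reflect d V i th : V i <> V (nxt d i) ->
  dirv d V i (- th) = reflect d V i (vneg (dirv d V i th)).
Proof.
  intro Hv. pose proof (tang_unit d V i Hv) as Hu.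
  unfold vneg. rewrite reflect_coord, !dirv_coord, cos_neg, sin_neg.
  destruct (tang d V i) as [a b]; simpl in *.
  set (c := cos th). set (s := sin th).
  f_equal.
  - transitivity (c * b + s * a - 2 * c * b * (a * a + b * b)); [rewrite Hu|]; ring.
  - transitivity (- c * a + s * b + 2 * c * a * (a * a + b * b)); [rewrite Hu|]; ring.
Qed.

Lemma Phi_functional d V p q1 q2 : simple_polygon d V ->
  Phi d V p q1 -> Phi d V p q2 -> q1 = q2.
Proof.
  intros HP [i1 [j1 [t1 [Hi1 [_ [Hj1 [Ht1 [Hp1 [Hf1 [Hr1 Hd1]]]]]]]]]]
             [i2 [j2 [t2 [Hi2 [_ [Hj2 [Ht2 [Hp2 [Hf2 [Hr2 Hd2]]]]]]]]]].
  pose proof (side_of_unique _ _ _ _ _ Hi1 Hi2); subst i2.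
  (* both times are the first return time to the boundary *)
  assert (Ht : t1 = t2).
  { destruct (Rtotal_order t1 t2) as [h|[h|h]]; auto; exfalso.
    - apply (Hf2 t1); [lra|]. rewrite <- Hp1. apply pos_on_boundary, Hj1.
    - apply (Hf1 t2); [lra|]. rewrite <- Hp2. apply pos_on_boundary, Hj2. }
  subst t2. rewrite <- Hp2 in Hp1.
  destruct (pos_inj d V j1 j2 _ _ HP Hj1 Hj2 Hp1) as [<- Hs].
  rewrite <- Hd2 in Hd1.
  pose proof (dirv_inj d V j1 _ _ (polygon_side_ne d V j1 HP (proj1 Hj1)) Hr1 Hr2 Hd1).
  destruct q1, q2; simpl in *; subst; reflexivity.
Qed.

Lemma Phi_reverse d V p q : simple_polygon d V ->
  Phi d V p q -> Phi d V (angle_neg q) (angle_neg p).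
Proof.
  intros HP [i [j [t [Hi [Hr [Hj [Ht [Hp [Hf [Hr' Hd]]]]]]]]]].
  pose proof (dirv_opp_of_reflect d V j _ _ (polygon_side_ne d V j HP (proj1 Hj)) Hd)
    as Hback.
  (* the backward ray from [q] retraces the forward ray from [p] *)
  assert (Hray : forall t', vadd (pos d V j (fst q)) (vscal t' (dirv d V j (- snd q))) =
                            vadd (pos d V i (fst p)) (vscal (t - t') (dirv d V i (snd p)))).
  { intro t'. rewrite Hback, Hp. unfold vneg, vadd, vscal.
    destruct (pos d V i (fst p)), (dirv d V i (snd p)); simpl. f_equal; ring. }
  exists j, i, t. unfold angle_neg; simpl.
  split; [exact Hj|]. split; [lra|]. split; [exact Hi|]. split; [exact Ht|].
  split; [|split; [|split; [lra|]]].
  - rewrite Hray. replace (t - t) with 0 by ring. unfold vadd, vscal.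
    destruct (pos d V i (fst p)); simpl. f_equal; ring.
  - intros t' Ht' Hb. apply (Hf (t - t')); [lra|]. rewrite <- Hray. exact Hb.
  - rewrite Hback. apply dirv_opp_reflect, (polygon_side_ne d V i HP (proj1 Hi)).
Qed.

(** * Periodic orbits of deterministic relations, read backwards *)

Section Orbits.

Variable F : pt -> pt -> Prop.
Hypothesis F_functional : forall a b c, F a b -> F a c -> b = c.

Lemma orbit_unique p o1 o2 : is_orbit F p o1 -> is_orbit F p o2 -> forall k, o1 k = o2 k.
Proof.
  intros [H0 H1] [G0 G1] k. induction k as [|k IH]; [congruence|].
  apply (F_functional (o1 k)); [apply H1 | rewrite IH; apply G1].
Qed.

Lemma orbit_periodic p o : is_orbit F p o -> periodic F p ->
  exists N, (0 < N)%nat /\ forall k, o (k + N)%nat = o k.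
Proof.
  intros Ho [o1 [Ho1 [N [HN E]]]]. exists N; split; [exact HN|].
  assert (Hshift : is_orbit F p (fun k => o (k + N)%nat)).
  { split; simpl.
    - rewrite (orbit_unique p o o1 Ho Ho1). exact E.
    - intro k. apply Ho. }
  exact (orbit_unique p _ _ Hshift Ho).
Qed.

End Orbits.

Lemma period_mul (o : nat -> pt) N : (forall k, o (k + N)%nat = o k) ->
  forall j k, o (k + j * N)%nat = o k.
Proof.
  intros H j. induction j as [|j IH]; intro k; [rewrite Nat.add_0_r; reflexivity|].
  replace (k + S j * N)%nat with (k + j * N + N)%nat by lia. rewrite H. apply IH.
Qed.

(* Since [k * (M - 1) = - k] modulo [M], the orbit [k |-> T (o (k * (M - 1)))]
   runs through the [M]-periodic orbit [o] backwards. *)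
Lemma reversed_orbit (F G : pt -> pt -> Prop) (T : pt -> pt) (o : nat -> pt) M :
  (0 < M)%nat -> (forall k, o (k + M)%nat = o k) -> (forall k, F (o k) (o (S k))) ->
  (forall a b, F a b -> G (T b) (T a)) ->
  is_orbit G (T (o O)) (fun k => T (o (k * (M - 1))%nat)) /\
  T (o (M * (M - 1))%nat) = T (o O).
Proof.
  intros HM Hper Ho HFG. split; [split|].
  - reflexivity.
  - intro k. cbv beta.
    rewrite Nat.mul_succ_l. set (x := (k * (M - 1))%nat).
    rewrite <- (Hper x). replace (x + M)%nat with (S (x + (M - 1))) by lia.
    apply HFG, Ho.
  - replace (M * (M - 1))%nat with (0 + (M - 1) * M)%nat by nia.
    rewrite (period_mul o M Hper). reflexivity.
Qed.

(* [rev_lam l] is R_{1/l} o S; it conjugates Phi_l to the inverse of Phi_{1/l}. *)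
Definition rev_lam (l : R) (a : pt) : pt := (fst a, - snd a / l).

Lemma Phi_lam_functional d V l a b c : simple_polygon d V ->
  Phi_lam d V l a b -> Phi_lam d V l a c -> b = c.
Proof.
  intros HP [q1 [H1 E1]] [q2 [H2 E2]].
  rewrite (Phi_functional d V a q1 q2 HP H1 H2) in E1. congruence.
Qed.

Lemma Phi_lam_reverse d V l a b : simple_polygon d V -> 0 < l ->
  Phi_lam d V l a b -> Phi_lam d V (/ l) (rev_lam l b) (rev_lam l a).
Proof.
  intros HP Hl [q [H ->]]. unfold rev_lam; simpl.
  exists (angle_neg a). split.
  - replace (- (l * snd q) / l) with (- snd q) by (field; lra).
    exact (Phi_reverse d V a q HP H).
  - unfold angle_neg; simpl. f_equal. field. lra.
Qed.

Lemma periodic_angle_neg d V p : simple_polygon d V ->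
  periodic (Phi d V) p -> periodic (Phi d V) (angle_neg p).
Proof.
  intros HP Hp. destruct Hp as [o [Ho HN]].
  destruct (orbit_periodic _ (fun a b c => Phi_functional d V a b c HP) p o Ho
              (ex_intro _ o (conj Ho HN))) as [M [HM Hper]].
  destruct Ho as [Ho0 Ho].
  destruct (reversed_orbit _ _ angle_neg o M HM Hper Ho (fun a b => Phi_reverse d V a b HP))
    as [Hrev Hclose].
  rewrite Ho0 in Hrev, Hclose.
  exists (fun k => angle_neg (o (k * (M - 1))%nat)). split; [exact Hrev|].
  exists M. split; assumption.
Qed.

Definition same_itin_periodic d V l (p q : pt) : Prop :=
  periodic (Phi_lam d V l) q /\
  exists o o', is_orbit (Phi d V) p o /\ is_orbit (Phi_lam d V l) q o' /\ same_itin d V o o'.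

Lemma same_itin_periodic_reverse d V l p q : simple_polygon d V -> 0 < l ->
  periodic (Phi d V) p -> same_itin_periodic d V l p q ->
  same_itin_periodic d V (/ l) (angle_neg p) (rev_lam l q).
Proof.
  intros HP Hl Hp [Hq [o [o' [Ho [Ho' Hit]]]]].
  destruct (orbit_periodic _ (fun a b c => Phi_functional d V a b c HP) p o Ho Hp)
    as [N [HN Hper]].
  destruct (orbit_periodic _ (fun a b c => Phi_lam_functional d V l a b c HP) q o' Ho' Hq)
    as [N' [HN' Hper']].
  set (M := (N * N')%nat).
  assert (HM : (0 < M)%nat) by (unfold M; nia).
  assert (PM : forall k, o (k + M)%nat = o k)
    by (intro k; unfold M; rewrite Nat.mul_comm; apply period_mul, Hper).
  assert (PM' : forall k, o' (k + M)%nat = o' k)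
    by (intro k; apply period_mul, Hper').
  destruct Ho as [Ho0 Ho], Ho' as [Ho0' Ho'].
  destruct (reversed_orbit _ _ angle_neg o M HM PM Ho (fun a b => Phi_reverse d V a b HP))
    as [Hrev _].
  destruct (reversed_orbit _ _ (rev_lam l) o' M HM PM' Ho'
              (fun a b => Phi_lam_reverse d V l a b HP Hl)) as [Hrev' Hclose'].
  rewrite Ho0 in Hrev. rewrite Ho0' in Hrev', Hclose'.
  split.
  - exists (fun k => rev_lam l (o' (k * (M - 1))%nat)). split; [exact Hrev'|].
    exists M. split; assumption.
  - exists (fun k => angle_neg (o (k * (M - 1))%nat)),
           (fun k => rev_lam l (o' (k * (M - 1))%nat)).
    split; [exact Hrev|]. split; [exact Hrev'|].
    intros k i. apply Hit.
Qed.

Lemma Un_cv_inv (u : nat -> R) (l : R) : l <> 0 -> Un_cv u l -> Un_cv (fun n => / u n) (/ l).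
Proof.
  intros Hl Hu. apply (continuity_seq (fun x => / x)); [|exact Hu].
  change (continuity_pt (/ id)%F l). apply continuity_pt_inv; [|exact Hl].
  apply derivable_continuous_pt, derivable_pt_id.
Qed.

Definition approximating_orbits d V (p : pt) (lam : nat -> R) (q : nat -> pt) : Prop :=
  (forall n, 0 < lam n) /\ Un_cv lam 1 /\
  Un_cv (fun n => fst (q n)) (fst p) /\ Un_cv (fun n => snd (q n)) (snd p) /\
  forall n, same_itin_periodic d V (lam n) p (q n).

Lemma approximating_orbits_reverse d V p lam q : simple_polygon d V ->
  periodic (Phi d V) p -> approximating_orbits d V p lam q ->
  approximating_orbits d V (angle_neg p) (fun n => / lam n) (fun n => rev_lam (lam n) (q n)).
Proof.
  intros HP Hp [Hpos [Hlam [Hfst [Hsnd Hq]]]].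
  assert (Hinv : Un_cv (fun n => / lam n) 1)
    by (rewrite <- Rinv_1; apply Un_cv_inv; [lra | exact Hlam]).
  split; [|split; [exact Hinv|split; [exact Hfst|split]]].
  - intro n. apply Rinv_0_lt_compat, Hpos.
  - pose proof (CV_mult _ _ _ _ (CV_opp _ _ Hsnd) Hinv) as H.
    rewrite Rmult_1_r in H. exact H.
  - intro n. apply same_itin_periodic_reverse; auto.
Qed.

Lemma lam_minus_stable_reverse d V p : simple_polygon d V ->
  lam_minus_stable_pt d V p -> lam_plus_stable_pt d V (angle_neg p).
Proof.
  intros HP [Hp [lam [q [Hmono Happrox]]]].
  split; [exact (periodic_angle_neg d V p HP Hp)|].
  exists (fun n => / lam n), (fun n => rev_lam (lam n) (q n)). split.
  - intro n. pose proof (proj1 Happrox) as Hpos.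
    apply Rinv_lt_contravar; [apply Rmult_lt_0_compat|]; auto.
  - exact (approximating_orbits_reverse d V p lam q HP Hp Happrox).
Qed.

Lemma lam_plus_stable_reverse d V p : simple_polygon d V ->
  lam_plus_stable_pt d V p -> lam_minus_stable_pt d V (angle_neg p).
Proof.
  intros HP [Hp [lam [q [Hmono Happrox]]]].
  split; [exact (periodic_angle_neg d V p HP Hp)|].
  exists (fun n => / lam n), (fun n => rev_lam (lam n) (q n)). split.
  - intro n. pose proof (proj1 Happrox) as Hpos.
    apply Rinv_lt_contravar; [apply Rmult_lt_0_compat|]; auto.
  - exact (approximating_orbits_reverse d V p lam q HP Hp Happrox).
Qed.

(* Stability is transported point by point. *)
Theorem lemma2p6 (d : nat) (V : nat -> pt) (C : pt -> Prop)
  (HP : simple_polygon d V) (HC : is_periodic_cylinder d V C) :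
  cyl_minus_stable d V C <-> cyl_plus_stable d V (reversed C).
Proof.
  split; intros [p [Hp Hstable]]; exists (angle_neg p); split.
  - unfold reversed, angle_neg; simpl. rewrite Ropp_involutive. destruct p; exact Hp.
  - exact (lam_minus_stable_reverse d V p HP Hstable).
  - exact Hp.
  - exact (lam_plus_stable_reverse d V p HP Hstable).
Qed.
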